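(* Let $G$ be an $N$-cube Adinkra with heights disregarded (a valise $N$-cube Adinkra). Then $G$ is vertex-transitive up to the boson/fermion bipartition: for any two vertices $u,v$ that are both bosons or both fermions there is an automorphism of $G$ mapping $u$ to $v$.
   Context: An Adinkra of dimension $N$ is a finite connected simple graph $G=(V,E)$ together with: (1) a bipartition of $V$ into bosons and fermions such that every edge joins a boson and a fermion; (2) a height function (here disregarded); (3) a coloring of $E$ by colors $\{1,\dots,N\}$ such that each vertex is incident to exactly one edge of each color; (4) an edge parity $\pi:E\to\mathbb{Z}_2$ (parity $1$ = dashed). These must satisfy: every path with edge colors $(i,j)$, $i\neq j$, lies in a unique 4-cycle with colors $(i,j,i,j)$, and every such two-colored 4-cycle has an odd number of dashed edges. An $N$-cube Adinkra has $2^N$ vertices. Switching a vertex reverses the parity of all edges incident to it. An automorphism of $G$ is a permutation of $V$ preserving adjacency, edge colors and the bipartition, which becomes parity-preserving after switching some set of vertices. *)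

From mathcomp Require Import all_boot perm.
Set Implicit Arguments. Unset Strict Implicit. Unset Printing Implicit Defensive.

(* An (heightless / valise) Adinkra of dimension N on a finite vertex type V.
   - boson v : true for bosons, false for fermions (the bipartition);
   - adj : the adjacency relation of the simple graph (symmetric, irreflexive);
   - color u v : color of the edge {u,v} (only meaningful when adj u v);
   - parity u v : edge parity (true = dashed), only meaningful when adj u v. *)
Section Adinkra.
Variables (N : nat) (V : finType).
Variables (boson : V -> bool) (adj : rel V) (color : V -> V -> 'I_N)
          (parity : V -> V -> bool).

Definition simple_graph : Prop :=
  (forall u v, adj u v = adj v u) /\ (forall v, ~~ adj v v).

Definition connected_graph : Prop := forall u v, connect adj u v.

Definition bipartite_bf : Prop :=
  forall u v, adj u v -> boson u != boson v.

Definition edge_labels_sym : Prop :=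
  forall u v, adj u v -> color u v = color v u /\ parity u v = parity v u.

Definition proper_N_coloring : Prop :=
  forall v (i : 'I_N), #|[set w | adj v w & color v w == i]| = 1.

Definition two_color_squares : Prop :=
  forall u v w, adj u v -> adj v w -> color u v != color v w ->
    #|[set x | [&& adj w x, color w x == color u v,
                   adj x u & color x u == color v w]]| = 1.

Definition odd_dashing : Prop :=
  forall u v w x, adj u v -> adj v w -> adj w x -> adj x u ->
    color u v != color v w -> color w x = color u v -> color x u = color v w ->
    odd (parity u v + parity v w + parity w x + parity x u).

Definition is_adinkra : Prop :=
  simple_graph /\ connected_graph /\ bipartite_bf /\ edge_labels_sym /\
  proper_N_coloring /\ two_color_squares /\ odd_dashing.

(* An automorphism: a permutation of V preserving adjacency, edge colors and
   the bipartition, which becomes parity-preserving after switching the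
   vertices of some set S (switching reverses the parity of all edges
   incident to a switched vertex). *)
Definition is_automorphism (s : {perm V}) : Prop :=
  [/\ forall u v, adj (s u) (s v) = adj u v,
      forall u v, adj u v -> color (s u) (s v) = color u v,
      forall v, boson (s v) = boson v
    & exists S : {set V}, forall u v, adj u v ->
        parity (s u) (s v) = (parity u v (+) (u \in S)) (+) (v \in S)].
End Adinkra.

From mathcomp Require Import all_boot perm.
Set Implicit Arguments. Unset Strict Implicit. Unset Printing Implicit Defensive.

(* Moving along the edge of color i is an involution [nbr i] of the vertices;
   by the square condition these involutions commute, hence each of them
   preserves adjacency and colors. By connectivity every vertex is reached from
   a base vertex by flipping along some set of colors, and #|V| = 2^N makes
   this set unique: the vertices get cube coordinates. Flipping along the set
   taking u to v is the automorphism; the set is even when u and v are both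
   bosons or both fermions. The odd dashing of the squares over the edges
   shows that a single flip preserves the parities up to switching. *)

Section CommutingInvolutions.
Variables (T : Type) (I : finType) (f : I -> T -> T).
Hypothesis fK : forall i, involutive (f i).
Hypothesis fC : forall i j x, f i (f j x) = f j (f i x).

Definition flips_along (s : seq I) (A : {set I}) (x : T) : T :=
  foldr (fun k y => if k \in A then f k y else y) x s.

Definition toggle (i : I) (A : {set I}) : {set I} :=
  [set k | (k \in A) (+) (k == i)].

Lemma flips_along_set0 s x : flips_along s set0 x = x.
Proof. by elim: s => //= k s IH; rewrite inE. Qed.

Lemma flips_along_toggle_notin s A i x :
  i \notin s -> flips_along s (toggle i A) x = flips_along s A x.
Proof.
elim: s => //= k s IH; rewrite inE negb_or => /andP[ik /IH->].
by rewrite inE eq_sym (negbTE ik) addbF.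
Qed.

Lemma flips_along_toggle s A i x : uniq s -> i \in s ->
  flips_along s (toggle i A) x = f i (flips_along s A x).
Proof.
elim: s => //= k s IH /andP[ks us]; rewrite inE.
have [-> _ | ik /= i_s] := eqVneq i k.
  rewrite flips_along_toggle_notin // !inE eqxx.
  by case: (k \in A); rewrite /= ?fK.
rewrite IH // inE eq_sym (negbTE ik) addbF.
by case: (k \in A); rewrite // fC.
Qed.

Lemma flips_along_inj s A : injective (flips_along s A).
Proof.
elim: s => //= k s IH x y /=; case: (k \in A) => fxy; apply: IH => //.
exact: inv_inj (fK k) _ _ fxy.
Qed.

End CommutingInvolutions.

Lemma surj_card_inj (T T' : finType) (f : T -> T') :
  (forall y, exists x, f x = y) -> #|T| = #|T'| -> injective f.
Proof.
move=> f_surj eq_card_TT'; apply: in2T; apply/image_injP.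
rewrite eq_card_TT'; apply/eqP/eq_card => y; have [x <-] := f_surj y.
by rewrite codom_f.
Qed.

Lemma count_mem_enum (T : finType) (A : {set T}) :
  count (mem A) (enum T) = #|A|.
Proof. by rewrite enumT cardE /enum_mem size_filter. Qed.

Lemma card_set_ord n : #|{set 'I_n}| = 2 ^ n.
Proof.
rewrite -[X in 2 ^ X](card_ord n) -[#|'I_n|]cardsT -card_powerset.
by apply: eq_card => A; rewrite powersetE subsetT.
Qed.

Section Switching.
Variables (V : finType) (adj : rel V).

Definition switching_equiv (p q : V -> V -> bool) : Prop :=
  exists S : {set V}, forall u v, adj u v ->
    q u v = (p u v (+) (u \in S)) (+) (v \in S).

Lemma switching_equiv_refl p : switching_equiv p p.
Proof. by exists set0 => u v _; rewrite !inE !addbF. Qed.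

Lemma switching_equiv_trans p q t :
  switching_equiv p q -> switching_equiv q t -> switching_equiv p t.
Proof.
move=> [S1 H1] [S2 H2]; exists [set w | (w \in S1) (+) (w \in S2)] => u v a.
rewrite H2 // H1 // !inE.
by case: (p u v); case: (u \in S1); case: (u \in S2); case: (v \in S1);
  case: (v \in S2).
Qed.

Lemma switching_equiv_comp p q (g : V -> V) :
  (forall u v, adj (g u) (g v) = adj u v) -> switching_equiv p q ->
  switching_equiv (fun u v => p (g u) (g v)) (fun u v => q (g u) (g v)).
Proof.
move=> adj_g [S H]; exists [set w | g w \in S] => u v a.
by rewrite H ?adj_g // !inE.
Qed.

End Switching.

Section ValiseAdinkra.
Variables (N : nat) (V : finType).
Variables (boson : V -> bool) (adj : rel V) (color : V -> V -> 'I_N)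
          (parity : V -> V -> bool).
Hypothesis adinkra : is_adinkra boson adj color parity.

Lemma adjC u v : adj u v = adj v u.
Proof. by case: adinkra => [[]]. Qed.

Lemma colorC u v : adj u v -> color u v = color v u.
Proof. by case: adinkra => _ [_ [_ [H _]]] /H[]. Qed.

Lemma parityC u v : adj u v -> parity u v = parity v u.
Proof. by case: adinkra => _ [_ [_ [H _]]] /H[]. Qed.

Definition nbr (i : 'I_N) (v : V) : V :=
  odflt v [pick w | adj v w && (color v w == i)].

Lemma colored_nbrs i v : [set w | adj v w & color v w == i] = [set nbr i v].
Proof.
case: adinkra => _ [_ [_ [_ [proper _]]]].
have /eqP/cards1P[x Hx] := proper v i.
have x_nbr w : (adj v w && (color v w == i)) = (w == x).
  by rewrite -in_set1 -Hx inE.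
rewrite Hx /nbr; case: pickP => [w|/(_ x)]; first by rewrite x_nbr => /eqP->.
by rewrite x_nbr eqxx.
Qed.

Lemma nbr_adj_color i v : adj v (nbr i v) && (color v (nbr i v) == i).
Proof. by have := set11 (nbr i v); rewrite -colored_nbrs inE. Qed.

Lemma nbr_adj i v : adj v (nbr i v).
Proof. by case/andP: (nbr_adj_color i v). Qed.

Lemma nbr_color i v : color v (nbr i v) = i.
Proof. by case/andP: (nbr_adj_color i v) => _ /eqP. Qed.

Lemma nbr_of_adj u v : adj u v -> nbr (color u v) u = v.
Proof.
move=> a; have : v \in [set w | adj u w & color u w == color u v].
  by rewrite inE a eqxx.
by rewrite colored_nbrs in_set1 => /eqP.
Qed.

Lemma nbrK i : involutive (nbr i).
Proof.
move=> v; have a : adj (nbr i v) v by rewrite adjC nbr_adj.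
by have := nbr_of_adj a; rewrite (colorC a) nbr_color.
Qed.

Lemma nbrC i j v : nbr i (nbr j v) = nbr j (nbr i v).
Proof.
have [-> // | ij] := eqVneq i j.
case: adinkra => _ [_ [_ [_ [_ [squares _]]]]].
have := squares _ _ _ (nbr_adj i v) (nbr_adj j (nbr i v)).
rewrite !nbr_color => /(_ ij)/eqP/cards1P[x Hx].
have := set11 x; rewrite -Hx inE => /and4P[a1 /eqP c1 a2 /eqP c2].
have e1 : nbr i (nbr j (nbr i v)) = x by have := nbr_of_adj a1; rewrite c1.
have e2 : nbr j v = x.
  by rewrite adjC in a2; have := nbr_of_adj a2; rewrite (colorC a2) c2.
by rewrite e2 -e1 nbrK.
Qed.

Lemma boson_nbr i v : boson (nbr i v) = ~~ boson v.
Proof.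
case: adinkra => _ [_ [bipartite _]].
have := bipartite _ _ (nbr_adj i v).
by case: (boson v); case: (boson (nbr i v)).
Qed.

Lemma nbr_mono_adj i : {mono nbr i : u v / adj u v}.
Proof.
suff nbr_hom_adj u v : adj u v -> adj (nbr i u) (nbr i v).
  by move=> u v; apply/idP/idP => [/nbr_hom_adj|/nbr_hom_adj//]; rewrite !nbrK.
by move=> /nbr_of_adj <-; rewrite nbrC nbr_adj.
Qed.

Lemma nbr_color_edge i u v : adj u v -> color (nbr i u) (nbr i v) = color u v.
Proof. by move=> /nbr_of_adj {1}<-; rewrite nbrC nbr_color. Qed.

Definition flips (A : {set 'I_N}) : V -> V := flips_along nbr (enum 'I_N) A.

Lemma flips_along_mono_adj s A : {mono flips_along nbr s A : u v / adj u v}.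
Proof.
by elim: s => // k s IH u v /=; case: (k \in A); rewrite ?nbr_mono_adj IH.
Qed.

Lemma flips_along_color_edge s A u v : adj u v ->
  color (flips_along nbr s A u) (flips_along nbr s A v) = color u v.
Proof.
move=> uv; elim: s => //= k s IH; case: (k \in A) => //.
by rewrite nbr_color_edge ?flips_along_mono_adj.
Qed.

Lemma boson_flips_along s A w :
  boson (flips_along nbr s A w) = boson w (+) odd (count (mem A) s).
Proof.
elim: s => [|k s IH] /=; first by rewrite addbF.
by case: (k \in A); rewrite /= ?boson_nbr IH ?addbN.
Qed.

Lemma boson_flips A w : boson (flips A w) = boson w (+) odd #|A|.
Proof. by rewrite boson_flips_along count_mem_enum. Qed.

Lemma flips_toggle A i w : flips (toggle i A) w = nbr i (flips A w).
Proof.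
by rewrite /flips (flips_along_toggle nbrK nbrC) ?enum_uniq ?mem_enum.
Qed.

Lemma flips_inj A : injective (flips A).
Proof. exact: flips_along_inj nbrK _ A. Qed.

Lemma flips_surj r w : exists A, flips A r = w.
Proof.
case: adinkra => _ [connected _].
pose R := [pred w | [exists A, flips A r == w]].
have R_adj x y : adj x y -> x \in R -> y \in R.
  move=> xy /existsP[A /eqP fAr]; apply/existsP; exists (toggle (color x y) A).
  by rewrite flips_toggle fAr nbr_of_adj.
have R_closed : closed adj R.
  by move=> x y xy; apply/idP/idP; apply: R_adj; rewrite // adjC.
have Rr : r \in R.
  by apply/existsP; exists set0; rewrite /flips flips_along_set0.
have := closed_connect R_closed (connected r w).
by rewrite Rr => /esym/existsP[A /eqP]; exists A.
Qed.

Lemma parity_nbr_square i j u : i != j ->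
  parity (nbr i u) (nbr i (nbr j u)) =
  ~~ (parity u (nbr j u) (+) parity u (nbr i u) (+)
       parity (nbr j u) (nbr i (nbr j u))).
Proof.
move=> ij; case: adinkra => _ [_ [_ [_ [_ [_ odd_dash]]]]].
have a1 := nbr_adj i u; have a2 := nbr_adj j (nbr i u).
have a3 : adj (nbr j (nbr i u)) (nbr j u) by rewrite adjC nbrC nbr_adj.
have a4 : adj (nbr j u) u by rewrite adjC nbr_adj.
have := odd_dash _ _ _ _ a1 a2 a3 a4.
rewrite (colorC a3) (colorC a4) !nbr_color -(nbrC i j u) nbr_color.
move=> /(_ ij erefl erefl).
have a3' : adj (nbr i (nbr j u)) (nbr j u) by rewrite adjC nbr_adj.
rewrite (parityC a3') (parityC a4) !oddD !oddb.
by move: (parity u (nbr i u)) (parity u (nbr j u)) (parity (nbr i u) _)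
  (parity (nbr j u) _) => [] [] [] [].
Qed.

Hypothesis card_cube : #|V| = 2 ^ N.

Lemma flips_set_inj r : injective (flips^~ r).
Proof.
by apply: surj_card_inj; [exact: flips_surj | rewrite card_set_ord card_cube].
Qed.

Definition coord (r : V) (i : 'I_N) (w : V) : bool :=
  [exists A, (flips A r == w) && (i \in A)].

Lemma coord_flips r i A : coord r i (flips A r) = (i \in A).
Proof.
apply/existsP/idP => [[B /andP[/eqP/flips_set_inj-> //]] | iA].
by exists A; rewrite eqxx.
Qed.

Lemma coord_nbr r i j w : coord r i (nbr j w) = coord r i w (+) (i == j).
Proof.
by have [A <-] := flips_surj r w; rewrite -flips_toggle !coord_flips inE.
Qed.

Lemma parity_nbr_switching i :
  switching_equiv adj parity (fun u v => parity (nbr i u) (nbr i v)).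
Proof.
have /card_gt0P[r _] : 0 < #|V| by rewrite card_cube expn_gt0.
(* [boson w (+) coord r i w] changes exactly across the edges of color j != i,
   which absorbs the odd dash of the (i,j)-square over such an edge. *)
exists [set w | parity w (nbr i w) (+) boson w (+) coord r i w].
move=> u v /nbr_of_adj <-; move: (color u v) => j; rewrite !inE.
rewrite boson_nbr coord_nbr.
have [<- | ij] := eqVneq i j.
  rewrite nbrK -(parityC (nbr_adj i u)).
  by case: (parity u _); case: (boson u); case: (coord r i u).
rewrite parity_nbr_square //.
by case: (parity u (nbr j u)); case: (parity u (nbr i u));
  case: (parity (nbr j u) _); case: (boson u); case: (coord r i u).
Qed.

Lemma flips_along_switching s A :
  switching_equiv adj parity
    (fun u v => parity (flips_along nbr s A u) (flips_along nbr s A v)).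
Proof.
elim: s => [|k s IH] /=; first exact: switching_equiv_refl.
case: (k \in A) => //; apply: switching_equiv_trans IH _.
exact: switching_equiv_comp (flips_along_mono_adj s A) (parity_nbr_switching k).
Qed.

Lemma flips_automorphism (A : {set 'I_N}) : ~~ odd #|A| ->
  is_automorphism boson adj color parity (perm (flips_inj (A := A))).
Proof.
move=> evenA; split=> [u v | u v uv | v |]; rewrite ?permE.
- exact: flips_along_mono_adj.
- exact: flips_along_color_edge.
- by rewrite boson_flips (negbTE evenA) addbF.
have [S HS] := flips_along_switching (enum 'I_N) A.
by exists S => u v uv; rewrite !permE HS.
Qed.

End ValiseAdinkra.

Theorem mainTheorem3 (N : nat) (V : finType) (boson : V -> bool) (adj : rel V)
    (color : V -> V -> 'I_N) (parity : V -> V -> bool) :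
  is_adinkra boson adj color parity ->
  #|V| = 2 ^ N ->
  forall u v : V, boson u = boson v ->
    exists s : {perm V}, is_automorphism boson adj color parity s /\ s u = v.
Proof.
move=> adinkra card_cube u v; have [A <-] := flips_surj adinkra u v.
rewrite (boson_flips adinkra) => same_statistics.
exists (perm (flips_inj adinkra (A := A))); split; last by rewrite permE.
apply: (flips_automorphism adinkra card_cube).
by move: same_statistics; case: (boson u); case: (odd #|A|).
Qed.
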